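(* Let $A$ be a real symmetric $n\times n$ matrix with smallest eigenvalue $\bar\lambda$, $a\in\mathbb{R}^n$, $C$ a real $l\times n$ matrix, $c\in\mathbb{R}^l$, $D$ a real $m\times n$ matrix, $d\in\mathbb{R}^m$. Consider the problem $$\inf\{x^T(A-\bar\lambda I_n)x+a^Tx:\ \|x\|^2\le 1,\ \|Cx-c\|^2\le 1,\ Dx-d\le 0\},$$ and assume its feasible set is nonempty. If $$\ker(A-\bar\lambda I_n)\cap\ker(C)\cap\{v\in\mathbb{R}^n: Dv\le 0,\ a^Tv\le 0\}\ne\{0\},$$ then the problem admits a minimizer $x^*$ with $\|x^*\|=1$.
   Context: Vector inequalities such as $Dv\le 0$ are componentwise. $I_n$ is the $n\times n$ identity matrix. *)

From mathcomp Require Import all_boot all_order all_algebra.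
From mathcomp Require Import reals.
Set Implicit Arguments. Unset Strict Implicit. Unset Printing Implicit Defensive.
Import Order.TTheory GRing.Theory Num.Theory.
Local Open Scope ring_scope.

Definition vnorm (R : realType) (n : nat) (x : 'cV[R]_n) : R :=
  Num.sqrt (\sum_(i < n) x i 0 ^+ 2).

Definition cV_nonpos (R : realType) (m : nat) (v : 'cV[R]_m) : Prop :=
  forall i : 'I_m, v i 0 <= 0.

Definition smallest_eigenvalue (R : realType) (n : nat) (A : 'M[R]_n) (lam : R) : Prop :=
  eigenvalue A lam /\ (forall mu : R, eigenvalue A mu -> lam <= mu).

Definition qobj (R : realType) (n : nat) (A : 'M[R]_n) (lam : R) (a x : 'cV[R]_n) : R :=
  (x^T *m (A - lam%:M) *m x) 0 0 + (a^T *m x) 0 0.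

Definition qfeasible (R : realType) (n l m : nat) (C : 'M[R]_(l, n)) (c : 'cV[R]_l)
  (D : 'M[R]_(m, n)) (d : 'cV[R]_m) (x : 'cV[R]_n) : Prop :=
  vnorm x ^+ 2 <= 1 /\ vnorm (C *m x - c) ^+ 2 <= 1 /\ cV_nonpos (D *m x - d).

From mathcomp Require Import all_boot all_order all_algebra.
From mathcomp Require Import reals.
From mathcomp Require Import all_classical all_reals all_analysis.
From mathcomp Require Import ring lra.
Import Order.TTheory GRing.Theory Num.Theory.
Import numFieldNormedType.Exports.

Local Open Scope ring_scope.

(* The feasible set is compact, so the objective has some minimizer x0.
   A nonzero v as in the hypothesis is a recession direction of the problem:
   moving along x0 + t v (t >= 0) keeps Cx, hence ||Cx - c||, unchanged, does not
   increase Dx, and, v being in the kernel of the symmetric matrix A - lam I, changes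
   the objective by t a^T v <= 0.  The ray leaves the unit ball at a point xs with
   ||xs|| = 1, which is therefore feasible and again a minimizer. *)

Section EntrywiseContinuity.
Context {R : realType} {T : topologicalType}.

Definition entrywise_continuous {p q} (F : T -> 'M[R]_(p, q)) :=
  forall i j, continuous (fun r => F r i j).

Lemma continuous_sum {I : Type} (s : seq I) (F : I -> T -> R) :
  (forall i, continuous (F i)) -> continuous (fun r => \sum_(i <- s) F i r).
Proof.
move=> Fc; elim: s => [|i s IHs] r.
  by under eq_fun do rewrite big_nil; exact: cst_continuous.
by under eq_fun do rewrite big_cons; exact: continuousD (Fc i r) (IHs r).
Qed.

Lemma entrywise_continuous_cst {p q} (M : 'M[R]_(p, q)) :
  entrywise_continuous (fun=> M).
Proof. by move=> i j; exact: cst_continuous. Qed.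

Lemma entrywise_continuous_add {p q} {F G : T -> 'M[R]_(p, q)} :
  entrywise_continuous F -> entrywise_continuous G ->
  entrywise_continuous (fun r => F r + G r).
Proof.
move=> Fc Gc i j; under eq_fun do rewrite mxE.
by move=> r; exact: continuousD (Fc i j r) (Gc i j r).
Qed.

Lemma entrywise_continuous_mul {p q k} {F : T -> 'M[R]_(p, q)} {G : T -> 'M[R]_(q, k)} :
  entrywise_continuous F -> entrywise_continuous G ->
  entrywise_continuous (fun r => F r *m G r).
Proof.
move=> Fc Gc i j; under eq_fun do rewrite mxE.
by apply: continuous_sum => h r; exact: continuousM (Fc i h r) (Gc h j r).
Qed.

Lemma entrywise_continuous_tr {p q} {F : T -> 'M[R]_(p, q)} :
  entrywise_continuous F -> entrywise_continuous (fun r => (F r)^T).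
Proof. by move=> Fc i j; under eq_fun do rewrite mxE; exact: Fc. Qed.

End EntrywiseContinuity.

Lemma entrywise_continuous_id {R : realType} {p q} :
  entrywise_continuous (fun r : 'M[R]_(p, q) => r).
Proof. by move=> i j; exact: coord_continuous. Qed.

Lemma dotmxC {R : comPzRingType} {k : nat} (y z : 'cV[R]_k) : (y^T *m z) 0 0 = (z^T *m y) 0 0.
Proof. by rewrite -[z^T *m y]trmxK trmx_mul trmxK [RHS]mxE. Qed.

Lemma dotmx_ge0 {R : realDomainType} {k : nat} (y : 'cV[R]_k) : 0 <= (y^T *m y) 0 0.
Proof. by rewrite mxE; apply: sumr_ge0 => i _; rewrite mxE -expr2 sqr_ge0. Qed.

Lemma dotmx_gt0 {R : realDomainType} {k : nat} {v : 'cV[R]_k} : v != 0 -> 0 < (v^T *m v) 0 0.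
Proof.
move=> v_neq0; rewrite lt_def dotmx_ge0 andbT; apply: contra v_neq0 => /eqP.
rewrite mxE (eq_bigr (fun i => v i 0 ^+ 2)) => [vv0|i _]; last by rewrite mxE expr2.
apply/eqP/matrixP => i j; rewrite ord1 mxE; apply/eqP; rewrite -sqrf_eq0.
by rewrite (psumr_eq0P _ vv0) // => h _; exact: sqr_ge0.
Qed.

Lemma vnormE {R : realType} {k : nat} (y : 'cV[R]_k) : vnorm y = Num.sqrt ((y^T *m y) 0 0).
Proof. by rewrite /vnorm mxE; congr Num.sqrt; apply: eq_bigr => i _; rewrite mxE expr2. Qed.

Lemma sqr_vnorm {R : realType} {k : nat} (y : 'cV[R]_k) : vnorm y ^+ 2 = (y^T *m y) 0 0.
Proof. by rewrite vnormE sqr_sqrtr // dotmx_ge0. Qed.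

Lemma sqr_vnorm_le1 {R : realType} {k : nat} (y : 'cV[R]_k) :
  (vnorm y ^+ 2 <= 1) = (vnorm y <= 1).
Proof. by rewrite expr_le1 // sqrtr_ge0. Qed.

Lemma quadratic_nonneg_root {R : rcfType} (p : R) {q r : R} :
  0 < q -> r <= 0 -> exists2 t, 0 <= t & q * t ^+ 2 + 2 * p * t + r = 0.
Proof.
move=> q_gt0 r_le0; have disc_ge0 : 0 <= p ^+ 2 - q * r by nra.
set u := Num.sqrt (p ^+ 2 - q * r).
have u_ge0 : 0 <= u := sqrtr_ge0 _.
have u2 : u ^+ 2 = p ^+ 2 - q * r by rewrite sqr_sqrtr.
exists ((u - p) / q); first by apply: divr_ge0; nra.
have -> : q * ((u - p) / q) ^+ 2 + 2 * p * ((u - p) / q) = (u ^+ 2 - p ^+ 2) / q.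
  by field; rewrite gt_eqF.
by rewrite u2; field; rewrite gt_eqF.
Qed.

Lemma trmxDZ {R : pzRingType} {p q} (X Y : 'M[R]_(p, q)) (t : R) :
  (X + t *: Y)^T = X^T + t *: Y^T.
Proof. by apply/matrixP => i j; rewrite !mxE. Qed.

Lemma dotmx_add_scale {R : comPzRingType} {k : nat} (x v : 'cV[R]_k) (t : R) :
  ((x + t *: v)^T *m (x + t *: v)) 0 0 =
  (v^T *m v) 0 0 * t ^+ 2 + 2 * (x^T *m v) 0 0 * t + (x^T *m x) 0 0.
Proof.
have entryD (M N : 'M[R]_1) : (M + N) 0 0 = M 0 0 + N 0 0 by rewrite mxE.
have entryZ (M : 'M[R]_1) : (t *: M) 0 0 = t * M 0 0 by rewrite mxE.
rewrite trmxDZ mulmxDl !mulmxDr -!scalemxAl -!scalemxAr !entryD !entryZ (dotmxC v x).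
ring.
Qed.

Lemma exists_unit_vnorm_on_ray {R : realType} {k : nat} (x v : 'cV[R]_k) :
  vnorm x <= 1 -> v != 0 -> exists2 t, 0 <= t & vnorm (x + t *: v) = 1.
Proof.
move=> x_le1 v_neq0.
have x2_le1 : (x^T *m x) 0 0 - 1 <= 0.
  by rewrite subr_le0 -sqr_vnorm sqr_vnorm_le1.
have [t t_ge0 root_t] :=
  quadratic_nonneg_root ((x^T *m v) 0 0) (dotmx_gt0 v_neq0) x2_le1.
exists t => //; rewrite vnormE dotmx_add_scale -[RHS]sqrtr1; congr Num.sqrt.
by apply/eqP; rewrite -subr_eq0 -addrA root_t.
Qed.

Lemma qobj_add_kernel {R : realType} {n} (A : 'M[R]_n) (lam : R) (a x v : 'cV[R]_n) (t : R) :
  A^T = A -> (A - lam%:M) *m v = 0 ->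
  qobj A lam a (x + t *: v) = qobj A lam a x + t * (a^T *m v) 0 0.
Proof.
move=> AT Mv; set M := A - lam%:M in Mv *.
have vM : v^T *m M = 0.
  by rewrite -[M]trmxK /M linearB /= AT tr_scalar_mx -trmx_mul Mv trmx0.
rewrite /qobj -/M trmxDZ mulmxDl -scalemxAl vM scaler0 addr0 mulmxDr -scalemxAr.
rewrite -[x^T *m M *m v]mulmxA Mv mulmx0 scaler0 addr0.
by rewrite [a^T *m _]mulmxDr -scalemxAr !mxE; ring.
Qed.

Lemma qfeasible_add_recession {R : realType} {n l m} (C : 'M[R]_(l, n)) (c : 'cV[R]_l)
    (D : 'M[R]_(m, n)) (d : 'cV[R]_m) (x v : 'cV[R]_n) (t : R) :
  qfeasible C c D d x -> C *m v = 0 -> cV_nonpos (D *m v) -> 0 <= t ->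
  vnorm (x + t *: v) <= 1 -> qfeasible C c D d (x + t *: v).
Proof.
move=> [_ [Cx Dx]] Cv Dv t_ge0 xtv_le1; split; [|split].
- by rewrite sqr_vnorm_le1.
- by rewrite mulmxDr -scalemxAr Cv scaler0 addr0.
- move=> i; rewrite mulmxDr -scalemxAr addrAC !mxE.
  by have := Dx i; have := Dv i; rewrite !mxE; nra.
Qed.

Lemma normr_coord_le_vnorm {R : realType} {k : nat} (x : 'cV[R]_k) i : `|x i 0| <= vnorm x.
Proof.
rewrite /vnorm -sqrtr_sqr ler_sqrt; last by apply: sumr_ge0 => j _; exact: sqr_ge0.
by rewrite (bigD1 i) //= lerDl; apply: sumr_ge0 => j _; exact: sqr_ge0.
Qed.

Local Open Scope classical_set_scope.

Lemma closed_sub_unit_cube_compact {R : realType} {n} (S : set 'rV[R]_n) :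
  closed S -> (forall r, S r -> forall i, `|r 0 i| <= 1) -> compact S.
Proof.
move=> S_closed S_cube.
have cube_compact := @rV_compact R n (fun=> `[-1, 1]) (fun=> @segment_compact R (-1) 1).
apply: (subclosed_compact S_closed cube_compact).
by move=> r /S_cube r_cube i; rewrite /= in_itv /= -ler_norml r_cube.
Qed.

Section QuadraticProgram.
Context {R : realType} {n l m : nat}.
Variables (A : 'M[R]_n) (lam : R) (a : 'cV[R]_n).
Variables (C : 'M[R]_(l, n)) (c : 'cV[R]_l) (D : 'M[R]_(m, n)) (d : 'cV[R]_m).

Let entrywise_continuous_trmx : entrywise_continuous (fun r : 'rV[R]_n => r^T).
Proof. exact/entrywise_continuous_tr/entrywise_continuous_id. Qed.

Let entrywise_continuous_affine p (M : 'M[R]_(p, n)) (b : 'cV[R]_p) :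
  entrywise_continuous (fun r : 'rV[R]_n => M *m r^T - b).
Proof.
exact: (entrywise_continuous_add
  (entrywise_continuous_mul (entrywise_continuous_cst M) entrywise_continuous_trmx)
  (entrywise_continuous_cst (- b))).
Qed.

Let continuous_sqr_vnorm p (F : 'rV[R]_n -> 'cV[R]_p) :
  entrywise_continuous F -> continuous (fun r => vnorm (F r) ^+ 2).
Proof.
move=> Fc; under eq_fun do rewrite sqr_vnorm.
exact: (entrywise_continuous_mul (entrywise_continuous_tr Fc) Fc 0 0).
Qed.

Let closed_sublevel (f : 'rV[R]_n -> R) (y : R) :
  continuous f -> closed [set r | f r <= y].
Proof. by move=> fc; exact: (preimage_closed (fun r _ => fc r) (@closed_le _ y)). Qed.

Lemma closed_qfeasible : closed [set r : 'rV[R]_n | qfeasible C c D d r^T].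
Proof.
have -> : [set r : 'rV[R]_n | qfeasible C c D d r^T] =
    [set r | vnorm r^T ^+ 2 <= 1] `&` ([set r | vnorm (C *m r^T - c) ^+ 2 <= 1] `&`
    \bigcap_(i in setT) [set r | (D *m r^T - d) i 0 <= 0]).
  apply/seteqP; split => r [r_ball [r_cyl r_poly]]; do 2!split => //.
  - by move=> i _; exact: r_poly.
  - by move=> i; exact: r_poly.
apply: closedI; first exact/closed_sublevel/continuous_sqr_vnorm.
apply: closedI; first exact/closed_sublevel/continuous_sqr_vnorm/entrywise_continuous_affine.
by apply: closed_bigI => i _; exact/closed_sublevel/entrywise_continuous_affine.
Qed.

Lemma compact_qfeasible : compact [set r : 'rV[R]_n | qfeasible C c D d r^T].
Proof.
apply: closed_sub_unit_cube_compact closed_qfeasible _ => r [r_ball _] i.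
have := normr_coord_le_vnorm r^T i; rewrite mxE => /le_trans; apply.
by rewrite -sqr_vnorm_le1.
Qed.

Lemma continuous_qobj : continuous (fun r : 'rV[R]_n => qobj A lam a r^T).
Proof.
have -> : (fun r : 'rV[R]_n => qobj A lam a r^T) =
          (fun r => (r^T^T *m (A - lam%:M) *m r^T + a^T *m r^T) 0 0).
  by apply: funext => r; rewrite mxE.
apply: entrywise_continuous_add; apply: entrywise_continuous_mul.
- exact: entrywise_continuous_mul (entrywise_continuous_tr _) (entrywise_continuous_cst _).
- exact: entrywise_continuous_trmx.
- exact: entrywise_continuous_cst.
- exact: entrywise_continuous_trmx.
Qed.

Lemma exists_qobj_minimizer : (exists x, qfeasible C c D d x) ->
  exists2 x0, qfeasible C c D d x0 &
    forall x, qfeasible C c D d x -> qobj A lam a x0 <= qobj A lam a x.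
Proof.
move=> [x x_feas].
have nonempty : [set r : 'rV[R]_n | qfeasible C c D d r^T] !=set0.
  by exists x^T; rewrite /= trmxK.
have [r r_feas r_min] := EVT_min_rV nonempty compact_qfeasible
  (continuous_subspaceT continuous_qobj).
exists r^T; first by move: r_feas; rewrite inE.
by move=> y y_feas; rewrite -[y]trmxK; apply: r_min; rewrite inE /= trmxK.
Qed.

End QuadraticProgram.

Theorem corollary3p4 (R : realType) (n l m : nat)
  (A : 'M[R]_n) (lam : R) (a : 'cV[R]_n)
  (C : 'M[R]_(l, n)) (c : 'cV[R]_l) (D : 'M[R]_(m, n)) (d : 'cV[R]_m) :
  A^T = A ->
  smallest_eigenvalue A lam ->
  (exists x : 'cV[R]_n, qfeasible C c D d x) ->
  (exists v : 'cV[R]_n,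
      v != 0 /\ (A - lam%:M) *m v = 0 /\ C *m v = 0 /\
      cV_nonpos (D *m v) /\ (a^T *m v) 0 0 <= 0) ->
  exists xs : 'cV[R]_n,
    qfeasible C c D d xs /\
    (forall x : 'cV[R]_n, qfeasible C c D d x -> qobj A lam a xs <= qobj A lam a x) /\
    vnorm xs = 1.
Proof.
move=> AT _ feasible [v [v_neq0 [Mv [Cv [Dv av_le0]]]]].
have [x0 x0_feas x0_min] := exists_qobj_minimizer A lam a C c D d feasible.
have x0_le1 : vnorm x0 <= 1.
  by case: x0_feas; rewrite sqr_vnorm_le1.
have [t t_ge0 xs_unit] := exists_unit_vnorm_on_ray x0 v x0_le1 v_neq0.
exists (x0 + t *: v); split; [|split] => //.
- by apply: qfeasible_add_recession => //; rewrite xs_unit.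
- move=> x x_feas; apply: le_trans (x0_min x x_feas).
  by rewrite qobj_add_kernel // gerDl mulr_ge0_le0.
Qed.
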